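(* In the cone setting of the context, for each $\ell\in\mathcal C'_{\mathbb C}$ we have $\|\ell\|'\le\sqrt2\,|\ell(e)|$, where $\|\ell\|'=\sup_{\|h\|\le1}|\ell(h)|$ is the dual norm on $\mathcal B'_{\mathbb C}$.
   Context: Cone setting. $V$ is a real topological vector space, $\mathcal S\subset V'$ a set of linear functionals such that $\ell(x)=0$ for all $\ell\in\mathcal S$ implies $x=0$, $C_{\mathbb R}=\{h\in V\setminus\{0\}:\ell(h)\ge0\ \forall\ell\in\mathcal S\}$, and $e\in C_{\mathbb R}$ is such that for every $h\in V$ some $\lambda\ge0$ has $\lambda e-h\in C_{\mathbb R}$. Norm $\|h\|=\inf\{\lambda\ge0:\ell(\lambda e\pm h)\ge0\ \forall\ell\in\mathcal S\}$; $\mathcal B_{\mathbb R}$ the completion of $V$; $\mathcal C_{\mathbb R}=\{h\in\mathcal B_{\mathbb R}\setminus\{0\}:\ell(h)\ge0\ \forall\ell\in\mathcal S\}$. $\mathcal S_*$ is the weak-$*$ closure of the convex hull of $\{\lambda\ell:\lambda>0,\ell\in\mathcal S\}$, and there exist $m\in\mathcal S_*$, $\kappa\in(0,1)$ with $m(e)=1$ and $m(h)\ge\kappa\|h\|$ on $\mathcal C_{\mathbb R}$. $\mathcal B_{\mathbb C}$ is the complexification of $\mathcal B_{\mathbb R}$ (elements $x+iy$, norm $\sup_\theta(\|\Re(e^{i\theta}(x+iy))\|^2+\|\Im(e^{i\theta}(x+iy))\|^2)^{1/2}$), real functionals extended complex-linearly. $\mathcal C_{\mathbb C}=\{z(x+iy):z\in\mathbb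 C\setminus\{0\},x,y\in\mathcal C_{\mathbb R}\}$ and $\mathcal C'_{\mathbb C}=\{\ell\in\mathcal B'_{\mathbb C}:\ell(h)\ne0\ \forall h\in\mathcal C_{\mathbb C}\}$. *)

From HB Require Import structures.
From mathcomp Require Import all_boot all_order all_algebra.
From mathcomp Require Import all_classical all_reals all_analysis.
From mathcomp Require Import complex.
Set Implicit Arguments. Unset Strict Implicit. Unset Printing Implicit Defensive.
Import Order.TTheory GRing.Theory Num.Theory.
Local Open Scope classical_set_scope.
Local Open Scope ring_scope.

Definition rlinear (R : realType) (V : lmodType R) (l : V -> R) : Prop :=
  forall (a : R) (x y : V), l (a *: x + y) = a * l x + l y.

Definition in_dual (R : realType) (V : topologicalLmodType R) (l : V -> R) : Prop :=
  rlinear l /\ continuous (l : V -> R^o).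

Definition separating (R : realType) (V : lmodType R) (S : set (V -> R)) : Prop :=
  forall x : V, (forall l, S l -> l x = 0) -> x = 0.

Definition coneV (R : realType) (V : lmodType R) (S : set (V -> R)) : set V :=
  [set h | h <> 0 /\ forall l, S l -> 0 <= l h].

Definition order_unit (R : realType) (V : lmodType R) (S : set (V -> R)) (e : V) : Prop :=
  coneV S e /\ forall h : V, exists lam : R, 0 <= lam /\ coneV S (lam *: e - h).

Definition gauge (R : realType) (V : lmodType R) (S : set (V -> R)) (e : V) (h : V) : R :=
  inf [set lam : R | 0 <= lam /\
         forall l, S l -> 0 <= l (lam *: e + h) /\ 0 <= l (lam *: e - h)].

Definition is_completion (R : realType) (V : lmodType R) (S : set (V -> R)) (e : V)
    (B : completeNormedModType R) (iota : V -> B) : Prop :=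
  [/\ forall (a : R) (x y : V), iota (a *: x + y) = a *: iota x + iota y,
      forall h : V, `|iota h| = gauge S e h
    & dense (range iota)].

Definition extends (R : realType) (V : lmodType R) (B : normedModType R)
    (iota : V -> B) (l : V -> R) (L : B -> R) : Prop :=
  continuous (L : B -> R^o) /\ forall h : V, L (iota h) = l h.

Definition coneB (R : realType) (V : lmodType R) (S : set (V -> R))
    (B : normedModType R) (iota : V -> B) : set B :=
  [set h | h <> 0 /\ forall l L, S l -> extends iota l L -> 0 <= L h].

(* S_* : weak-* closure in V' of the convex hull of {lambda l : lambda > 0, l in S}.
   A basic weak-* neighbourhood of m is given by finitely many points h_i and eps > 0;
   elements of the convex hull are the combinations sum_j c_j l_j with c_j > 0, l_j in S
   (at least one term). *)
Definition S_star (R : realType) (V : topologicalLmodType R) (S : set (V -> R))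
    (m : V -> R) : Prop :=
  in_dual m /\
  forall (n : nat) (h : 'I_n -> V) (eps : R), 0 < eps ->
    exists (k : nat) (c : 'I_k.+1 -> R) (ls : 'I_k.+1 -> V -> R),
      (forall j, 0 < c j /\ S (ls j)) /\
      forall i, `| \sum_(j < k.+1) c j * ls j (h i) - m (h i) | < eps.

(* ---------- Complexification B_C = B + iB, represented as B * B ---------- *)

Definition cadd (R : realType) (B : normedModType R) (w w' : B * B) : B * B :=
  (w.1 + w'.1, w.2 + w'.2).

(* (a + i b)(x + i y) = (a x - b y) + i (b x + a y) *)
Definition cscale (R : realType) (B : normedModType R) (z : R[i]) (w : B * B) : B * B :=
  ((complex.Re z : R) *: w.1 - (complex.Im z : R) *: w.2, (complex.Im z : R) *: w.1 + (complex.Re z : R) *: w.2).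

(* ||x+iy|| = sup_theta (||Re(e^{i theta}(x+iy))||^2 + ||Im(e^{i theta}(x+iy))||^2)^{1/2} *)
Definition cnorm (R : realType) (B : normedModType R) (w : B * B) : R :=
  sup [set Num.sqrt (`|cos t *: w.1 - sin t *: w.2| ^+ 2 +
                     `|sin t *: w.1 + cos t *: w.2| ^+ 2) | t in [set: R]].

Definition cmod (R : realType) (z : R[i]) : R := Normc.normc z.

Definition clinear (R : realType) (B : normedModType R) (f : B * B -> R[i]) : Prop :=
  forall (z : R[i]) (w w' : B * B), f (cadd (cscale z w) w') = z * f w + f w'.

(* continuity of a linear functional on the normed space B_C, i.e. boundedness *)
Definition cbounded (R : realType) (B : normedModType R) (f : B * B -> R[i]) : Prop :=
  exists M : R, forall w : B * B, cmod (f w) <= M * cnorm w.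

Definition in_cdual (R : realType) (B : normedModType R) (f : B * B -> R[i]) : Prop :=
  clinear f /\ cbounded f.

Definition dual_norm (R : realType) (B : normedModType R) (f : B * B -> R[i]) : R :=
  sup [set cmod (f w) | w in [set w : B * B | cnorm w <= 1]].

Definition coneC (R : realType) (V : lmodType R) (S : set (V -> R))
    (B : normedModType R) (iota : V -> B) : set (B * B) :=
  [set w | exists (z : R[i]) (x y : B),
     [/\ z <> 0, coneB S iota x, coneB S iota y & w = cscale z (x, y)]].

Definition dual_coneC (R : realType) (V : lmodType R) (S : set (V -> R))
    (B : normedModType R) (iota : V -> B) : set (B * B -> R[i]) :=
  [set f | in_cdual f /\ forall w, coneC S iota w -> f w <> 0].

From Pilot Require Import Defs.
From HB Require Import structures.
From mathcomp Require Import all_boot all_order all_algebra.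
From mathcomp Require Import all_classical all_reals all_analysis.
From mathcomp Require Import complex.
From mathcomp Require Import ring lra.
Set Implicit Arguments.
Unset Strict Implicit.
Unset Printing Implicit Defensive.
Import Order.TTheory GRing.Theory Num.Theory.
Local Open Scope classical_set_scope.
Local Open Scope ring_scope.

(* Put f h := l (h, 0) for h in V.  As l does not vanish on C_C, f x + i f y
   is never 0 for x, y in C_R; hence f maps any two elements of the closed cone
   to vectors making an angle of at most pi/2, for otherwise some positive
   combination of them would be sent to a real multiple of i times the image of
   one of them.  Applied to e + v and e - v with ||v|| < 1 this gives
   |f v| <= |f e|, so |l (h, 0)| <= ||h|| |l (e, 0)| on V and, by density and
   continuity, on B.  Finally
   |l (x + i y)| <= (||x|| + ||y||) |l (e, 0)| <= sqrt 2 ||x + i y|| |l (e, 0)|. *)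

Section LinearCombination.
Variables (R : pzRingType) (U W : lmodType R) (f : U -> W).
Hypothesis f_lin : forall a x y, f (a *: x + y) = a *: f x + f y.

Lemma lincomb0 : f 0 = 0.
Proof.
have := f_lin 1 0 0; rewrite !scale1r addr0 => f00.
by apply: (addrI (f 0)); rewrite -f00 addr0.
Qed.

Lemma lincombZ a x : f (a *: x) = a *: f x.
Proof. by rewrite -[a *: x]addr0 f_lin lincomb0 addr0. Qed.

Lemma lincombD x y : f (x + y) = f x + f y.
Proof. by rewrite -[x in LHS]scale1r f_lin scale1r. Qed.

Lemma lincombB x y : f (x - y) = f x - f y.
Proof. by rewrite -scaleN1r addrC f_lin scaleN1r addrC. Qed.

End LinearCombination.

Section ComplexFacts.
Variable R : rcfType.
Implicit Types z w : R[i].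

Lemma normc_sqrE z : (Normc.normc z ^+ 2)%:C%C = z * z^*%C.
Proof.
case: z => a b /=; rewrite sqr_sqrtr ?addr_ge0 ?sqr_ge0 //.
by congr (_ +i* _)%C; ring.
Qed.

Lemma Re_mulJ_addsub z w :
  complex.Re ((z + w) * (z - w)^*%C) = Normc.normc z ^+ 2 - Normc.normc w ^+ 2.
Proof.
case: z => a b; case: w => c d /=.
by rewrite !sqr_sqrtr ?addr_ge0 ?sqr_ge0 //; ring.
Qed.

Lemma normc_real (a : R) : Normc.normc a%:C%C = `|a|.
Proof. by rewrite /= expr0n addr0 sqrtr_sqr. Qed.

Lemma normc_i : Normc.normc ('i%C : R[i]) = 1.
Proof. by rewrite /= expr0n expr1n add0r sqrtr1. Qed.

Lemma normc_ge0 z : 0 <= Normc.normc z.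
Proof. by case: z => a b; apply: sqrtr_ge0. Qed.

End ComplexFacts.

Lemma sqrt_sqrD_le (R : rcfType) (a b : R) :
  0 <= a -> 0 <= b -> Num.sqrt (a ^+ 2 + b ^+ 2) <= a + b.
Proof.
move=> a_ge0 b_ge0; rewrite -(ger0_norm (addr_ge0 a_ge0 b_ge0)) -sqrtr_sqr.
by rewrite ler_sqrt ?addr_ge0 ?sqr_ge0 //; nra.
Qed.

Section PositiveCone.
Variables (R : realType) (V : lmodType R) (S : set (V -> R)).
Hypothesis S_lin : forall k, S k -> rlinear k.

Let kD k : S k -> forall x y, k (x + y) = k x + k y.
Proof. by move=> /S_lin; apply: lincombD. Qed.
Let kB k : S k -> forall x y, k (x - y) = k x - k y.
Proof. by move=> /S_lin; apply: lincombB. Qed.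
Let kZ k : S k -> forall a x, k (a *: x) = a * k x.
Proof. by move=> /S_lin; apply: lincombZ. Qed.

Definition coneV0 := [set x : V | forall k, S k -> 0 <= k x].

Lemma coneV0D x y : coneV0 x -> coneV0 y -> coneV0 (x + y).
Proof. by move=> x0 y0 k Sk; rewrite kD //; apply: addr_ge0; [exact: x0 | exact: y0]. Qed.

Lemma coneV0Z a x : 0 <= a -> coneV0 x -> coneV0 (a *: x).
Proof. by move=> a0 x0 k Sk; rewrite kZ //; apply: mulr_ge0 => //; exact: x0. Qed.

Lemma coneVZ a x : 0 < a -> coneV S x -> coneV S (a *: x).
Proof.
move=> a_gt0 [x_neq0 x_ge0]; split; last by apply: coneV0Z => //; apply: ltW.
by move/eqP; rewrite scaler_eq0 gt_eqF //= => /eqP.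
Qed.

Hypothesis Hsep : separating S.

Lemma coneV_comb a b x y : 0 < a -> 0 <= b -> coneV S x -> coneV0 y ->
  coneV S (a *: x + b *: y).
Proof.
move=> a_gt0 b_ge0 [x_neq0 x_ge0] y_ge0; split; last first.
  by apply: coneV0D; apply: coneV0Z => //; apply: ltW.
move=> comb0; apply: x_neq0; apply: Hsep => k Sk.
have := congr1 k comb0; rewrite kD // !kZ // (lincomb0 (S_lin Sk)).
have := x_ge0 k Sk; have := y_ge0 k Sk; nra.
Qed.

Section OrderUnit.
Variable e : V.
Hypothesis He : order_unit S e.

Let e_ge0 : coneV0 e. Proof. by case: He => -[]. Qed.

Let coneV0_shift lam r x : lam <= r -> coneV0 (lam *: e + x) -> coneV0 (r *: e + x).
Proof.
move=> lam_le_r x_ge0.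
have -> : r *: e + x = (r - lam) *: e + (lam *: e + x) by rewrite scalerBl addrA subrK.
by apply: coneV0D => //; apply: coneV0Z; rewrite ?subr_ge0.
Qed.

Let gauge_set_neq0 v : [set lam : R | 0 <= lam /\
  forall k, S k -> 0 <= k (lam *: e + v) /\ 0 <= k (lam *: e - v)] !=set0.
Proof.
case: He => _ e_unit.
have [lam1 [lam1_ge0 [_ minus_ge0]]] := e_unit v.
have [lam2 [lam2_ge0 [_ plus_ge0]]] := e_unit (- v).
rewrite opprK in plus_ge0.
exists (Num.max lam1 lam2); split; first by rewrite le_max lam1_ge0.
move=> k Sk; split; [apply: (coneV0_shift _ plus_ge0) | apply: (coneV0_shift _ minus_ge0)];
  by rewrite // le_max lexx ?orbT.
Qed.

Lemma gauge_ge0 v : 0 <= gauge S e v.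
Proof. by apply: lb_le_inf (gauge_set_neq0 v) _ => lam []. Qed.

Lemma gauge_lt_coneV0 v r :
  gauge S e v < r -> coneV0 (r *: e + v) /\ coneV0 (r *: e - v).
Proof.
case/(inf_lt (gauge_set_neq0 v)) => lam [_ lam_pm] /ltW lam_le_r.
by split; apply: (coneV0_shift lam_le_r) => k Sk; case: (lam_pm k Sk).
Qed.

Lemma gauge_eq0 v : gauge S e v = 0 -> v = 0.
Proof.
move=> gv0; apply: Hsep => k Sk.
have ke_ge0 : 0 <= k e := e_ge0 Sk.
have kv_le r : 0 < r -> `|k v| <= r * k e.
  rewrite -{1}gv0 => /gauge_lt_coneV0[plus_ge0 minus_ge0].
  have := plus_ge0 k Sk; have := minus_ge0 k Sk.
  rewrite kB // kD // kZ // ler_norml => ? ?; apply/andP; split; lra.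
apply/eqP; rewrite -normr_le0; apply/ler_addgt0Pr => eps eps_gt0; rewrite add0r.
have ke1_gt0 : 0 < k e + 1 by lra.
apply: (le_trans (kv_le _ (divr_gt0 eps_gt0 ke1_gt0))).
by rewrite mulrAC ler_pdivrMr // ler_wpM2l ?(ltW eps_gt0) //; lra.
Qed.

Lemma coneV_coneB (B : normedModType R) (iota : V -> B) :
  (forall h, `|iota h| = gauge S e h) -> forall x, coneV S x -> coneB S iota (iota x).
Proof.
move=> iota_norm x [x_neq0 x_ge0]; split.
  by move=> ix0; apply: x_neq0; apply: gauge_eq0; rewrite -iota_norm ix0 normr0.
by move=> k K Sk [_ ->]; apply: x_ge0.
Qed.

Section ConeAngle.
Variable f : V -> R[i].
Hypothesis f_lin : forall (a : R) x y, f (a *: x + y) = a%:C%C * f x + f y.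
Hypothesis f_cone : forall x y, coneV S x -> coneV S y -> f x + 'i%C * f y <> 0.

Let f0 : f 0 = 0.
Proof.
have := f_lin 1 0 0; rewrite scale1r addr0 mul1r => f00.
by apply: (addrI (f 0)); rewrite -f00 addr0.
Qed.

Let fZ a x : f (a *: x) = a%:C%C * f x.
Proof. by rewrite -[a *: x]addr0 f_lin f0 addr0. Qed.

Lemma f_cone0 x y : coneV S x -> coneV0 y -> f x + 'i%C * f y <> 0.
Proof.
move=> x_cone y_ge0; have [->|y_neq0] := eqVneq y 0.
  rewrite f0 mulr0 addr0 => fx0.
  by apply: (f_cone x_cone x_cone); rewrite fx0 mulr0 addr0.
by apply: f_cone => //; split => //; apply/eqP.
Qed.

Lemma Re_mulJ_ge0 p q : coneV0 p -> coneV0 q -> 0 <= complex.Re (f p * (f q)^*%C).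
Proof.
move=> p_ge0 q_ge0.
have [->|p_neq0] := eqVneq p 0; first by rewrite f0 mul0r.
have [->|q_neq0] := eqVneq q 0; first by rewrite f0 conjc0 mulr0.
have q_cone : coneV S q by split => //; apply/eqP.
set z := f p; set w := f q; set rho := z * w^*%C.
set N := Normc.normc w ^+ 2; set a := complex.Re rho; set b := complex.Im rho.
have N_gt0 : 0 < N.
  rewrite lt_neqAle sqr_ge0 andbT eq_sym sqrf_eq0.
  apply/eqP => /Normc.eq0_normc w0; apply: (f_cone q_cone q_cone).
  by rewrite -/w w0 mulr0 addr0.
rewrite leNgt; apply/negP => a_lt0.
(* Since w w^* z = rho w, the cone element x below has f x = i b w; pairing it
   with a nonnegative multiple of q (chosen by the sign of b) makes l vanish. *)
pose x := N *: p + (- a) *: q.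
have x_cone : coneV S x.
  by apply: coneV_comb; rewrite ?oppr_ge0 ?ltW //; split => //; apply/eqP.
have fx : f x = 'i%C * (b%:C%C * w).
  rewrite f_lin fZ normc_sqrE -/z rmorphN.
  have -> : w * w^*%C * z = rho * w by rewrite /rho; ring.
  by rewrite [rho]complexE -/a -/b -/w; ring.
have [b_le0|b_gt0] := leP b 0.
  have Nb_ge0 : 0 <= - b by rewrite oppr_ge0.
  apply: (f_cone0 x_cone (coneV0Z Nb_ge0 q_ge0)).
  by rewrite fx fZ -/w rmorphN; ring.
apply: (f_cone (coneVZ b_gt0 q_cone) x_cone).
by rewrite fx fZ -/w mulrA -expr2 sqr_i; ring.
Qed.

Let fN x : f (- x) = - f x.
Proof. by rewrite -scaleN1r fZ rmorphN1 mulN1r. Qed.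

Lemma normc_le_gauge v : Normc.normc (f v) <= gauge S e v * Normc.normc (f e).
Proof.
have fv_le r : gauge S e v < r -> Normc.normc (f v) <= r * Normc.normc (f e).
  move=> gv_lt_r; have r_ge0 : 0 <= r := ltW (le_lt_trans (gauge_ge0 v) gv_lt_r).
  have [plus_ge0 minus_ge0] := gauge_lt_coneV0 gv_lt_r.
  have := Re_mulJ_ge0 plus_ge0 minus_ge0.
  rewrite !f_lin fN Re_mulJ_addsub Normc.normcM normc_real ger0_norm // subr_ge0.
  by rewrite ler_sqr ?nnegrE ?mulr_ge0 ?normc_ge0.
have [fe0|fe_neq0] := eqVneq (Normc.normc (f e)) 0.
  by rewrite fe0 mulr0 -(mulr0 (gauge S e v + 1)) -fe0 fv_le // ltrDl.
have fe_gt0 : 0 < Normc.normc (f e) by rewrite lt_neqAle eq_sym fe_neq0 normc_ge0.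
rewrite -ler_pdivrMr //; apply/ler_addgt0Pr => eps eps_gt0.
by rewrite ler_pdivrMr // fv_le // ltrDl.
Qed.

End ConeAngle.
End OrderUnit.
End PositiveCone.

Section Complexification.
Variables (R : realType) (B : normedModType R).

Lemma cnorm_real (x : B) : cnorm (x, 0) = `|x|.
Proof.
have rotation_norm t : Num.sqrt (`|cos t *: x - sin t *: (0 : B)| ^+ 2 +
                                 `|sin t *: x + cos t *: (0 : B)| ^+ 2) = `|x|.
  rewrite !scaler0 subr0 addr0 !normrZ !exprMn !real_normK ?num_real //.
  by rewrite -mulrDl cos2Dsin2 mul1r sqrtr_sqr normr_id.
rewrite /cnorm /= [X in sup X](_ : _ = [set `|x|]) ?sup1 //.
by apply/seteqP; split => [_ [t _ <-] | _ ->] /=; [|exists 0]; rewrite ?rotation_norm.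
Qed.

Lemma normD_le_cnorm (x y : B) : `|x| + `|y| <= Num.sqrt 2 * cnorm (x, y).
Proof.
have rot_le t : `|cos t *: x - sin t *: y| <= `|x| + `|y| /\
                `|sin t *: x + cos t *: y| <= `|x| + `|y|.
  have := cos_max t; have := sin_max t; have := normr_ge0 x; have := normr_ge0 y.
  by split; [apply: le_trans (ler_normB _ _) _ | apply: le_trans (ler_normD _ _) _];
    rewrite !normrZ; nra.
have pythagoras_le : Num.sqrt (`|x| ^+ 2 + `|y| ^+ 2) <= cnorm (x, y).
  apply: ub_le_sup; last by exists 0 => //; rewrite cos0 sin0 !scale1r !scale0r subr0 add0r.
  exists (2 * (`|x| + `|y|)) => _ [t _ <-]; have [le1 le2] := rot_le t.
  by apply: le_trans (sqrt_sqrD_le (normr_ge0 _) (normr_ge0 _)) _; lra.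
apply: le_trans (ler_wpM2l (sqrtr_ge0 2) pythagoras_le).
rewrite -sqrtrM // -(ger0_norm (addr_ge0 (normr_ge0 x) (normr_ge0 y))) -sqrtr_sqr.
rewrite ler_sqrt ?mulr_ge0 ?addr_ge0 ?sqr_ge0 //.
by have := sqr_ge0 (`|x| - `|y|); nra.
Qed.

Lemma normc_le_dense (D : set B) (g : B -> R[i]) (M c : R) :
  dense D -> (forall x y, g (x + y) = g x + g y) ->
  (forall h, Normc.normc (g h) <= M * `|h|) -> 0 <= c ->
  (forall d, D d -> Normc.normc (g d) <= c * `|d|) ->
  forall h, Normc.normc (g h) <= c * `|h|.
Proof.
move=> D_dense gD g_bnd c_ge0 g_le h; apply/ler_addgt0Pr => eps eps_gt0.
have den_gt0 : 0 < c + `|M| + 1 by have := normr_ge0 M; lra.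
have r_gt0 : 0 < eps / (c + `|M| + 1) by rewrite divr_gt0.
have [d [hd Dd]] : (ball h (eps / (c + `|M| + 1)) `&` D) !=set0.
  by apply: D_dense; [exists h; apply: ballxx | apply: ball_open].
rewrite -ball_normE /= in hd.
have -> : g h = g d + g (h - d) by rewrite -gD addrC subrK.
apply: le_trans (le_normcD _ _) _.
have := g_le d Dd; have := g_bnd (h - d); have := ler_normB h (h - d).
rewrite opprB addrC subrK.
have := normr_ge0 M; have := ler_norm M; have := normr_ge0 (h - d).
have : (eps / (c + `|M| + 1)) * (c + `|M| + 1) = eps by rewrite divfK ?gt_eqF.
nra.
Qed.

Section ComplexLinearFunctional.
Variable l : B * B -> R[i].
Hypothesis l_lin : clinear l.

Lemma clinear_real (a : R) (x y : B) :
  l (a *: x + y, 0) = a%:C%C * l (x, 0) + l (y, 0).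
Proof. by rewrite -l_lin /Defs.cadd /Defs.cscale /= !scaler0 scale0r subr0 !addr0. Qed.

Lemma clinear_pair (x y : B) : l (x, y) = l (x, 0) + 'i%C * l (y, 0).
Proof.
rewrite addrC -l_lin /Defs.cadd /Defs.cscale /=.
by rewrite !scaler0 scale0r scale1r subr0 !addr0 add0r.
Qed.

End ComplexLinearFunctional.
End Complexification.

Theorem lemma5p5 (R : realType) (V : topologicalLmodType R) (S : set (V -> R)) (e : V)
    (B : completeNormedModType R) (iota : V -> B) (m : V -> R) (kappa : R)
    (HS : forall l, S l -> in_dual l)
    (Hsep : separating S)
    (He : order_unit S e)
    (HB : is_completion S e iota)
    (Hm : S_star S m)
    (Hme : m e = 1)
    (Hkappa : 0 < kappa < 1)
    (HmC : forall L, extends iota m L ->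
             forall h, coneB S iota h -> kappa * `|h| <= L h)
    (l : B * B -> R[i]) (Hl : dual_coneC S iota l) :
  dual_norm l <= Num.sqrt 2 * cmod (l (iota e, 0)).
Proof.
have S_lin k : S k -> rlinear k by case/HS.
case: Hl => -[l_lin [M l_bnd]] l_cone.
case: HB => iota_lin iota_norm iota_dense.
pose f v := l (iota v, 0).
have f_lin (a : R) x y : f (a *: x + y) = a%:C%C * f x + f y.
  by rewrite /f iota_lin clinear_real.
have f_cone x y : coneV S x -> coneV S y -> f x + 'i%C * f y <> 0.
  move=> x_cone y_cone; rewrite -clinear_pair //; apply: l_cone.
  have iota_cone := coneV_coneB S_lin Hsep He iota_norm.
  exists 1, (iota x), (iota y).
  split; [exact/eqP/oner_neq0 | exact: iota_cone | exact: iota_cone |].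
  by rewrite /Defs.cscale /= !scale1r !scale0r subr0 add0r.
set c := cmod (f e).
have c_ge0 : 0 <= c := normc_ge0 _.
have l_le h : cmod (l (h, 0)) <= c * `|h|.
  apply: (normc_le_dense (g := fun h => l (h, 0)) (M := M) iota_dense) => //.
  - by move=> x y; have := clinear_real l_lin 1 x y; rewrite scale1r mul1r.
  - by move=> h'; rewrite -cnorm_real; apply: l_bnd.
  - by move=> _ [v _ <-]; rewrite iota_norm mulrC; apply: normc_le_gauge.
rewrite /dual_norm; apply: ge_sup.
  by exists (cmod (l (0, 0))), (0, 0) => //=; rewrite cnorm_real normr0.
move=> _ [[x y] /= xy_le1 <-].
rewrite /cmod clinear_pair //; apply: le_trans (le_normcD _ _) _.
rewrite Normc.normcM normc_i mul1r; apply: le_trans (lerD (l_le x) (l_le y)) _.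
rewrite -mulrDr mulrC ler_wpM2r // (le_trans (normD_le_cnorm x y)) //.
by rewrite ler_piMr ?sqrtr_ge0.
Qed.
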